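(* Let $\Gamma$ be an admissible parabolic graph (for a fixed $D\ge2$), let $d$ be the degree of a parabolic component of $\Gamma$, and let $\Sigma$ be an elliptic (i.e. non-affine Dynkin) component of $\Gamma$. Then $d\notin\operatorname{ds}\Sigma$. If $\Gamma$ is saturated, then also $d-1\notin\operatorname{ds}\Sigma$.
   Context: Graphs are finite, simple. $\mathbb{Z}\Gamma$ is the lattice freely generated by the vertices with $v^2=-2$, $u\cdot v=1$ if adjacent, $0$ otherwise. $\mathcal{F}_h(\Gamma)=(\mathbb{Z}\Gamma\oplus\mathbb{Z}h)/\ker$, with $h^2=2D$ and $v\cdot h=1$ for all vertices. $\Gamma$ is parabolic if $\mathbb{Z}\Gamma\otimes\mathbb{R}$ is negative semidefinite and degenerate; its components are simply laced Dynkin diagrams (elliptic components) and affine Dynkin diagrams (parabolic components, at least one). For an affine Dynkin diagram $\Sigma'$ with $\ker\mathbb{Z}\Sigma'$ generated by $k_{\Sigma'}=\sum n_vv$, $n_v>0$, its degree is $\sum n_v$. For a Dynkin diagram $\Sigma$, the degree set $\operatorname{ds}\Sigma$ is the set of coefficient sums $\sum m_v$ of all positive roots $\sum m_vv\in\mathbb{Z}\Sigma$ (e.g. $\operatorname{ds}\mathbf A_p=\{1,\dots,p\}$, $\operatorname{ds}\mathbf D_q=\{1,\dots,2q-3\}$, $\operatorname{ds}\mathbf E_6=\{1,\dots,11\}$, $\operatorname{ds}\mathbf E_7=\{1,\dots,13,17\}$, $\operatorname{ds}\mathbf E_8=\{1,\dots,16,23\}$). A $2D$-polarized lattice $(S,h)$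 is admissible if it has no $e$ with $e^2=-2$, $e\cdot h=0$, nor $e$ with $e^2=0$, $e\cdot h=2$; $\Gamma$ is admissible if $\mathcal{F}_h(\Gamma)$ is (in particular it has positive inertia index $1$). For a polarized lattice, its set of lines is $\{v: v^2=-2, v\cdot h=1\}$, viewed as a graph with $u,v$ adjacent iff $u\cdot v=1$; $\Gamma$ is saturated if $\Gamma$ equals the set of lines of $\mathcal{F}_h(\Gamma)$. *)

From mathcomp Require Import all_boot all_order all_algebra.
Set Implicit Arguments. Unset Strict Implicit. Unset Printing Implicit Defensive.
Import Order.TTheory GRing.Theory Num.Theory.
Local Open Scope ring_scope.

(* A finite simple graph is a symmetric irreflexive relation e on a finType T
   (vertices).  Elements of ZΓ ⊕ Zh are represented as pairs (x, a) with
   x : T -> int the coefficients on the vertices and a the coefficient of h. *)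

Definition lvec (T : finType) := ((T -> int) * int)%type.

Definition gram (T : finType) (e : rel T) (u v : T) : int :=
  if u == v then -2 else if e u v then 1 else 0.

Definition zform (T : finType) (e : rel T) (x y : T -> int) : int :=
  \sum_(u : T) \sum_(v : T) x u * y v * gram e u v.

(* The form on ZΓ ⊕ Zh, with h^2 = 2D and v.h = 1 for all vertices v. *)
Definition bform (D : nat) (T : finType) (e : rel T) (w1 w2 : lvec T) : int :=
  zform e w1.1 w2.1 + w1.2 * (\sum_(v : T) w2.1 v)
  + w2.2 * (\sum_(u : T) w1.1 u) + w1.2 * w2.2 * (2 * D)%:R.

Definition hvec (T : finType) : lvec T := (fun _ => 0, 1).
Definition vertex (T : finType) (v : T) : lvec T := (fun u => (u == v)%:R, 0).
Definition lsub (T : finType) (w1 w2 : lvec T) : lvec T :=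
  (fun u => w1.1 u - w2.1 u, w1.2 - w2.2).

(* Two representatives define the same element of
   F_h(Γ) = (ZΓ ⊕ Zh)/ker  iff their difference is in the kernel. *)
Definition feq (D : nat) (T : finType) (e : rel T) (w1 w2 : lvec T) : Prop :=
  forall w, bform D e (lsub w1 w2) w = 0.

(* positive inertia index of F_h(Γ) equals 1: some positive vector, and no
   positive definite rank-2 sublattice. *)
Definition pos_inertia_one (D : nat) (T : finType) (e : rel T) : Prop :=
  (exists w, 0 < bform D e w w) /\
  (forall w1 w2 : lvec T, ~ [/\ 0 < bform D e w1 w1, 0 < bform D e w2 w2 &
        bform D e w1 w2 ^+ 2 < bform D e w1 w1 * bform D e w2 w2]).

Definition admissible (D : nat) (T : finType) (e : rel T) : Prop :=
  [/\ pos_inertia_one D e,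
      (forall w : lvec T, ~ (bform D e w w = -2 /\ bform D e w (hvec T) = 0))
    & (forall w : lvec T, ~ (bform D e w w = 0 /\ bform D e w (hvec T) = 2))].

Definition nonzero (T : finType) (x : T -> int) : Prop := exists v, x v != 0.

Definition parabolic (T : finType) (e : rel T) : Prop :=
  (forall x : T -> int, zform e x x <= 0) /\
  (exists x : T -> int, nonzero x /\ forall y, zform e x y = 0).

Definition supported (T : finType) (C : {set T}) (x : T -> int) : Prop :=
  forall u, u \notin C -> x u = 0.

Definition component (T : finType) (e : rel T) (C : {set T}) : Prop :=
  exists v, C = [set u | connect e v u].

Definition elliptic_component (T : finType) (e : rel T) (C : {set T}) : Prop :=
  component e C /\
  forall x, supported C x -> nonzero x -> zform e x x < 0.

Definition parabolic_component (T : finType) (e : rel T) (C : {set T}) : Prop :=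
  [/\ component e C,
      (forall x, supported C x -> zform e x x <= 0)
    & exists x, [/\ supported C x, nonzero x &
                   forall y, supported C y -> zform e x y = 0]].

Definition degree (T : finType) (e : rel T) (C : {set T}) (d : int) : Prop :=
  exists k : T -> int,
    [/\ supported C k,
        (forall v, v \in C -> 0 < k v),
        (forall x, supported C x ->
           ((forall y, supported C y -> zform e x y = 0) <->
            exists m : int, forall v, x v = m * k v))
      & d = \sum_(v in C) k v].

Definition in_ds (T : finType) (e : rel T) (S : {set T}) (n : int) : Prop :=
  exists r : T -> int,
    [/\ supported S r, (forall v, 0 <= r v), zform e r r = -2
      & \sum_(v in S) r v = n].

(* Γ saturated: the map from vertices to F_h(Γ) is a graph isomorphism
   onto the set of lines {w : w^2 = -2, w.h = 1}. *)
Definition saturated (D : nat) (T : finType) (e : rel T) : Prop :=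
  [/\ (forall u v : T, feq D e (vertex u) (vertex v) -> u = v),
      (forall u v : T, (bform D e (vertex u) (vertex v) == 1) = e u v)
    & (forall w : lvec T, bform D e w w = -2 -> bform D e w (hvec T) = 1 ->
         exists v : T, feq D e w (vertex v))].

From mathcomp Require Import all_boot all_order all_algebra.
Set Implicit Arguments. Unset Strict Implicit. Unset Printing Implicit Defensive.
Import Order.TTheory GRing.Theory Num.Theory.
Local Open Scope ring_scope.

(* Let k be the primitive kernel vector of the affine component C, so d = deg k.
   As k is supported away from the elliptic component S, it is orthogonal to
   ZS, so for a positive root r of S the vector k - r satisfies (k - r)^2 = -2
   and (k - r).h = d - deg r.  If deg r = d this contradicts admissibility.
   If deg r = d - 1 then k - r is a line, hence by saturation equal in F_h(Γ)
   to a vertex v; then r + v is orthogonal to ZS, which forces v in S and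
   makes r + v a nonzero isotropic vector of the negative definite ZS. *)

Section ZForm.
Variables (T : finType) (e : rel T).

Lemma zformDl (a b y : T -> int) :
  zform e (fun u => a u + b u) y = zform e a y + zform e b y.
Proof.
rewrite /zform -big_split; apply: eq_bigr => u _; rewrite -big_split.
by apply: eq_bigr => v _; rewrite !mulrDl.
Qed.

Lemma zformBl (a b y : T -> int) :
  zform e (fun u => a u - b u) y = zform e a y - zform e b y.
Proof.
rewrite /zform -sumrB; apply: eq_bigr => u _; rewrite -sumrB.
by apply: eq_bigr => v _; rewrite !mulrBl.
Qed.

Lemma zformBr (y a b : T -> int) :
  zform e y (fun u => a u - b u) = zform e y a - zform e y b.
Proof.
rewrite /zform -sumrB; apply: eq_bigr => u _; rewrite -sumrB.
by apply: eq_bigr => v _; rewrite mulrBr !mulrBl.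
Qed.

Lemma zform0r (a : T -> int) : zform e a (fun _ => 0) = 0.
Proof.
by rewrite /zform big1 // => u _; rewrite big1 // => v _; rewrite mulr0 mul0r.
Qed.

Lemma zformC (a b : T -> int) : symmetric e -> zform e a b = zform e b a.
Proof.
move=> se; rewrite /zform exchange_big; apply: eq_bigr => u _.
by apply: eq_bigr => v _; rewrite /gram eq_sym se [a v * _]mulrC.
Qed.

Lemma bform_lattice (D : nat) (a b : T -> int) :
  bform D e (a, 0) (b, 0) = zform e a b.
Proof. by rewrite /bform /= !mul0r !addr0. Qed.

Lemma bform_lattice_h (D : nat) (a : T -> int) :
  bform D e (a, 0) (hvec T) = \sum_v a v.
Proof. by rewrite /bform /= zform0r !mul0r mul1r !addr0 add0r. Qed.

Lemma supported_sub (A B : {set T}) (x : T -> int) :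
  A \subset B -> supported A x -> supported B x.
Proof.
by move=> /subsetP AB xA u uB; apply: xA; apply: contra uB; apply: AB.
Qed.

Lemma sum_supported (A : {set T}) (x : T -> int) :
  supported A x -> \sum_v x v = \sum_(v in A) x v.
Proof.
move=> xA; rewrite [RHS]big_mkcond; apply: eq_bigr => v _.
by case: ifP => // /negbT /xA.
Qed.

End ZForm.

Section Components.
Variables (T : finType) (e : rel T).
Hypothesis se : symmetric e.

Lemma component_eq (C S : {set T}) u :
  component e C -> component e S -> u \in C -> u \in S -> C = S.
Proof.
move=> [c ->] [s ->]; rewrite !inE => cu su; apply/setP => x; rewrite !inE.
have conn_sym := sym_connect_sym se.
by rewrite (same_connect conn_sym cu) (same_connect conn_sym su).
Qed.

Lemma gram_component_out (S : {set T}) u v :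
  component e S -> u \notin S -> v \in S -> gram e u v = 0.
Proof.
move=> [s ->] uS vS; rewrite /gram; case: eqP => [uv|_].
  by rewrite uv vS in uS.
case euv: (e u v) => //; rewrite !inE in uS vS.
by case/negP: uS; apply: connect_trans vS (connect1 _); rewrite se.
Qed.

Lemma zform_component_out (S : {set T}) (a b : T -> int) :
  component e S -> supported (~: S) a -> supported S b -> zform e a b = 0.
Proof.
move=> cS aS bS; rewrite /zform big1 // => u _; rewrite big1 // => v _.
case uS: (u \in S); first by rewrite aS ?inE ?uS // !mul0r.
case vS: (v \in S); last by rewrite bS ?vS // mulr0 mul0r.
by rewrite (gram_component_out cS) ?uS // mulr0.
Qed.

Lemma isotropic_component_disjoint_elliptic (C S : {set T}) (k : T -> int) :
  component e C -> elliptic_component e S ->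
  supported C k -> nonzero k -> zform e k k = 0 -> C \subset ~: S.
Proof.
move=> cC [cS ellS] kC nz_k kk; apply/subsetP => u uC; rewrite inE.
apply/negP => uS.
have kS : supported S k by rewrite -(component_eq cC cS uC uS).
by have := ellS k kS nz_k; rewrite kk ltxx.
Qed.

Lemma elliptic_root_add_vertex_not_radical (S : {set T}) (r : T -> int) v :
  elliptic_component e S -> supported S r -> (forall u, 0 <= r u) ->
  zform e r r = -2 ->
  ~ (forall y, supported S y -> zform e (fun u => r u + (u == v)%:R) y = 0).
Proof.
move=> [cS ellS] rS r_ge0 rr radical.
have rv : zform e (fun u => (u == v)%:R) r = 2.
  apply/eqP; have := radical r rS; rewrite zformDl rr addrC.
  by move/eqP; rewrite subr_eq0.
have vS : v \in S.
  apply: contraT => vS; move: rv; rewrite (zform_component_out cS) //.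
  by move=> u; rewrite inE negbK; case: eqP => // ->; rewrite (negbTE vS).
have xS : supported S (fun u => r u + (u == v)%:R).
  by move=> u uS; rewrite rS //; case: eqP => [uv|]; [rewrite uv vS in uS|].
have nz_x : nonzero (fun u => r u + (u == v)%:R).
  by exists v; rewrite eqxx gt_eqF // ltr_wpDl.
by have := ellS _ xS nz_x; rewrite radical // ltxx.
Qed.

End Components.

Section KernelSubRoot.
Variables (D : nat) (T : finType) (e : rel T) (S : {set T}) (k : T -> int).
Hypotheses (se : symmetric e) (ellS : elliptic_component e S).
Hypotheses (k_out : supported (~: S) k) (kk : zform e k k = 0).

Definition kernel_sub_root (r : T -> int) : lvec T := (fun u => k u - r u, 0).

Let k_orth r : supported S r -> zform e k r = 0.
Proof. exact: (zform_component_out se (proj1 ellS) k_out). Qed.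

Lemma kernel_sub_root_sq r : supported S r -> zform e r r = -2 ->
  bform D e (kernel_sub_root r) (kernel_sub_root r) = -2.
Proof.
move=> rS rr; rewrite bform_lattice zformBl !zformBr kk rr k_orth //.
by rewrite [zform e r k]zformC // k_orth // !subr0 sub0r opprK.
Qed.

Lemma kernel_sub_root_h r : supported S r ->
  bform D e (kernel_sub_root r) (hvec T) = \sum_v k v - \sum_(v in S) r v.
Proof. by move=> rS; rewrite bform_lattice_h sumrB (sum_supported rS). Qed.

Lemma kernel_sub_root_vertex r v : supported S r ->
  feq D e (kernel_sub_root r) (vertex v) ->
  forall y, supported S y -> zform e (fun u => r u + (u == v)%:R) y = 0.
Proof.
move=> rS kr_v y yS; have := kr_v (y, 0).
rewrite /lsub /= subrr bform_lattice !zformBl k_orth // sub0r -opprD zformDl.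
by move/eqP; rewrite oppr_eq0 => /eqP.
Qed.

Lemma kernel_degree_notin_ds :
  (forall w : lvec T, ~ (bform D e w w = -2 /\ bform D e w (hvec T) = 0)) ->
  ~ in_ds e S (\sum_v k v).
Proof.
move=> no_root [r [rS _ rr deg_r]]; apply: (no_root (kernel_sub_root r)).
by rewrite kernel_sub_root_sq // kernel_sub_root_h // deg_r subrr.
Qed.

Lemma kernel_degree_pred_notin_ds :
  saturated D e -> ~ in_ds e S (\sum_v k v - 1).
Proof.
move=> [_ _ lines_are_vertices] [r [rS r_ge0 rr deg_r]].
have kr_h : bform D e (kernel_sub_root r) (hvec T) = 1.
  by rewrite kernel_sub_root_h // deg_r opprB addrC subrK.
have [v kr_v] := lines_are_vertices _ (kernel_sub_root_sq rS rr) kr_h.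
exact: (elliptic_root_add_vertex_not_radical se ellS rS r_ge0 rr
  (kernel_sub_root_vertex rS kr_v)).
Qed.

End KernelSubRoot.

Theorem corollary3p4 (D : nat) (T : finType) (e : rel T) :
  (2 <= D)%N -> symmetric e -> irreflexive e ->
  admissible D e -> parabolic e ->
  forall (C S : {set T}) (d : int),
    parabolic_component e C -> degree e C d -> elliptic_component e S ->
    ~ in_ds e S d /\ (saturated D e -> ~ in_ds e S (d - 1)).
Proof.
move=> _ se _ [_ no_root _] _ C S d [cC _ _] [k [kC k_gt0 kker ->]] ellS.
have k_radical : forall y, supported C y -> zform e k y = 0.
  by apply/(kker k kC); exists 1 => v; rewrite mul1r.
have kk := k_radical k kC.
have [c c_in_C] : exists c, c \in C.
  by case: cC => c ->; exists c; rewrite inE; apply: connect0.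
have nz_k : nonzero k by exists c; rewrite gt_eqF // k_gt0.
have CS := isotropic_component_disjoint_elliptic se cC ellS kC nz_k kk.
have k_out := supported_sub CS kC.
rewrite -(sum_supported kC).
by split; [exact: kernel_degree_notin_ds | exact: kernel_degree_pred_notin_ds].
Qed.
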